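(* If $R \subseteq \mathbb{R}$ contains an infinite strictly increasing sequence, then there exists a function $f : \mathbb{N}^{\mathbb{N}} \to R$ such that Player I has a winning strategy in $\Gamma(f)$, and for each $r \in \mathbb{R}$ and each Cantor set $C \subseteq \mathbb{N}^{\mathbb{N}}$ the set $C \cap \{f \ge r\}$ is either uncountable or empty.
   Context: Here $X = \mathbb{N}^{\mathbb{N}}$ (the branches of the full tree of finite sequences of natural numbers) with the product topology. A Cantor set is a subset homeomorphic to the middle-thirds Cantor set. $\{f \ge r\} = \{x : f(x) \ge r\}$. The game $\Gamma(f)$: Player I and Player II alternate, Player I moving first; Player I plays natural numbers $x_0, x_1, \dots$, and after each move $x_t$ Player II plays a real number $v_t$. Player II wins the run iff $f(x_0,x_1,\dots) = \limsup_{t\to\infty} v_t$; otherwise Player I wins. *)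

From HB Require Import structures.
From mathcomp Require Import all_boot all_order all_algebra.
From mathcomp Require Import all_classical all_reals all_analysis.
Set Implicit Arguments. Unset Strict Implicit. Unset Printing Implicit Defensive.
Import Order.TTheory GRing.Theory Num.Theory.
Import numFieldTopology.Exports numFieldNormedType.Exports.
Local Open Scope classical_set_scope.
Local Open Scope ring_scope.

(* Baire space N^N with the product topology (nat carries the discrete topology). *)
Definition baire : Type := prod_topology (fun _ : nat => nat).
HB.instance Definition _ := Pointed.on baire.
HB.instance Definition _ := Nbhs.on baire.
HB.instance Definition _ := Topological.on baire.

Definition middle_thirds (R : realType) : set R :=
  [set y : R | exists a : nat -> bool,
     series (fun n : nat => (2 * (a n)%:R : R) / 3 ^+ n.+1) @ \oo --> y].
Arguments middle_thirds R : clear implicits.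

Definition homeomorphic_sets (T U : topologicalType) (A : set T) (B : set U) :=
  exists (h : T -> U) (g : U -> T),
    [/\ h @` A `<=` B, g @` B `<=` A,
        {in A, cancel h g} & {in B, cancel g h}] /\
    {within A, continuous h} /\ {within B, continuous g}.

Definition cantor_set (R : realType) (C : set baire) :=
  homeomorphic_sets C (middle_thirds R).
Arguments cantor_set R C : clear implicits.

(* The game Gamma(f): player I's strategy maps II's previous moves
   v_0..v_{t-1} to x_t; II wins iff f x = limsup v_t (in the extended reals). *)
Definition playI (R : realType) (sigma : seq R -> nat) (v : nat -> R) : baire :=
  fun t => sigma [seq v i | i <- iota 0 t].

Definition I_has_winning_strategy (R : realType) (f : baire -> R) :=
  exists sigma : seq R -> nat, forall v : nat -> R,
    ((f (playI sigma v))%:E != limn_esup (fun t => (v t)%:E))%E.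

From HB Require Import structures.
From mathcomp Require Import all_boot all_order all_algebra.
From mathcomp Require Import all_classical all_reals all_analysis.
From mathcomp Require Import wochoice zify lra.
Import Order.TTheory GRing.Theory Num.Theory.
Import numFieldTopology.Exports numFieldNormedType.Exports.
Local Open Scope classical_set_scope.
Local Open Scope ring_scope.
Set Implicit Arguments.
Unset Strict Implicit.

(* Let a_0 < a_1 < ... lie in S.  Player I answers II's moves v_0, ..., v_t
   by the number of k <= t with a_k <= v_t.  If limsup v_t = a_j, the play
   x of I eventually stays <= j+1 and is infinitely often >= j: x "hovers"
   at j.  No play hovers at both j and j+2, so for every level p one of
   3p, 3p+1, 3p+2, the escape index of x at p, is not hovered at, and
   f x := a (escape x (level x)) never equals the limsup of the play x.

   The level function is chosen so that every Cantor set C contains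
   continuum many points of every level; if f x0 >= r for some x0, all
   points of C of level (level x0)+1 satisfy f >= r, so C & {f >= r} is
   uncountable, and otherwise it is empty.  Such a level function comes
   from a Bernstein-type transfinite selection (an injective choice of
   points for at most continuum many sets that each contain a copy of the
   continuum), which applies because a Cantor set is determined by the
   values of its parametrization at the finite ternary expansions. *)

Lemma wf_image_recursion (Y X : Type) (lt : Y -> Y -> Prop) (F : Y -> set X -> X) :
  well_founded lt -> exists g : Y -> X, forall j, g j = F j [set g i | i in lt^~ j].
Proof.
move=> lt_wf; pose G j (rec : forall i, lt i j -> X) :=
  F j [set x | exists i (h : lt i j), rec i h = x].
exists (Fix lt_wf (fun _ => X) G) => j; rewrite Fix_eq; last first.
  move=> i r1 r2 eq_r; rewrite /G; congr (F _ _); apply/seteqP.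
  by split=> _ [k [h <-]]; exists k, h; rewrite eq_r.
rewrite /G; congr (F _ _); apply/seteqP.
by split=> [_ [i [h <-]]|_ [i h <-]]; [exists i | exists i, h].
Qed.

Section WellOrder.
Variables (T : choiceType) (W : rel T).
Hypothesis W_wo : well_order W.

Lemma wo_least (P : T -> Prop) : (exists y, P y) ->
  exists z, P z /\ forall y, P y -> W z y.
Proof.
move=> [y Py]; have [|z [[Pz zlb] _]] := @W_wo [pred t | `[< P t >]].
  by rewrite /nonempty; exists y; rewrite inE.
by move: Pz; rewrite inE => Pz; exists z; split=> // t Pt; apply: zlb; rewrite inE.
Qed.

Let W_chain : wo_chain W predT := withinW W_wo.

Lemma wo_total : total W.
Proof. by move=> x y; apply: (wo_chainW W_chain). Qed.

Lemma wo_antisym : antisymmetric W.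
Proof. by move=> x y; apply: (wo_chain_antisymmetric W_chain). Qed.

Definition wo_lt (x y : T) := W x y /\ x <> y.

Lemma wo_lt_wf : well_founded wo_lt.
Proof.
move=> j; apply: contrapT => nacc.
have [z [nz zmin]] := wo_least (ex_intro (fun t => ~ Acc wo_lt t) j nacc).
apply: nz; constructor => y [yz neq]; apply: contrapT => ny.
by apply: neq; apply: wo_antisym; rewrite yz zmin.
Qed.

(* An injection of K into the well-ordered T can be chosen so that no value
   has a copy of all of T strictly below it (its values lie in the initial
   segment of T of cardinality |T|). *)
Lemma initial_embedding (K : Type) (jK : K -> T) : injective jK ->
  exists io : K -> T, injective io /\ forall k,
    ~ exists e : T -> T, injective e /\ forall y, wo_lt (e y) (io k).
Proof.
move=> jK_inj; set copy_below := fun j => exists e : T -> T,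
  injective e /\ forall y, wo_lt (e y) j.
have [[j0 copy_j0]|no_copy] := pselect (exists j, copy_below j); last first.
  by exists jK; split=> // k copy_k; apply: no_copy; exists (jK k).
have [j [[e [e_inj e_lt]] j_least]] := wo_least (ex_intro copy_below j0 copy_j0).
exists (e \o jK); split=> [k1 k2 /e_inj/jK_inj //|k /j_least W_j].
by have [W_e ne] := e_lt (jK k); apply: ne; apply: wo_antisym; rewrite W_j W_e.
Qed.

(* The point for the index
   io k is chosen by recursion along W, avoiding all earlier choices. *)
Lemma injective_selection (X : pointedType) (K : Type) (target : K -> set X) :
  (forall k, exists e : T -> X, injective e /\ forall y, target k (e y)) ->
  (exists jK : K -> T, injective jK) ->
  exists sel : K -> X, injective sel /\ forall k, target k (sel k).
Proof.
move=> target_big [jK jK_inj].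
have [io [io_inj io_init]] := initial_embedding jK_inj.
pose F j (used : set X) :=
  xget point [set x | (exists k, io k = j /\ target k x) /\ ~ used x].
have [g gE] := wf_image_recursion F wo_lt_wf.
have g_fresh k : target k (g (io k)) /\
    ~ exists2 i, wo_lt i (io k) & g i = g (io k).
  rewrite {1 2}gE /F; set A := (X in xget _ X).
  suff [[k' [/io_inj <- Tk']] fresh] : A (xget point A) by [].
  apply: xgetPex; apply: contrapT => A_empty.
  have [e [e_inj e_in]] := target_big k.
  have used y : exists i, wo_lt i (io k) /\ g i = e y.
    apply: contrapT => unused; apply: A_empty; exists (e y).
    by split=> [|[i lt_i gi]]; [exists k | apply: unused; exists i].
  apply: (io_init k); exists (fun y => xget (io k) [set i | wo_lt i (io k) /\ g i = e y]).
  split=> [y1 y2 eq_y|y]; last by have [] := xgetPex (io k) (used y).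
  apply: e_inj; have [_ <-] := xgetPex (io k) (used y1).
  by have [_ <-] := xgetPex (io k) (used y2); rewrite eq_y.
exists (g \o io); split=> [k1 k2 /= eq_g|k]; last exact: (g_fresh k).1.
apply: io_inj; apply: contrapT => ne.
have [W12|W21] := orP (wo_total (io k1) (io k2)).
  by apply: (g_fresh k2).2; exists (io k1).
by apply: (g_fresh k1).2; exists (io k2) => //; split=> //; exact: nesym.
Qed.

End WellOrder.

Definition continuum_in {X : Type} (A : set X) :=
  exists e : (nat -> bool) -> X, injective e /\ forall b, A (e b).

Definition continuum_small (K : Type) := exists e : K -> (nat -> bool), injective e.

(* Cantor's diagonal argument: a copy of 2^N is not countable. *)
Lemma continuum_not_countable {X : Type} (A : set X) : continuum_in A -> ~ countable A.
Proof.
move=> [e [e_inj e_in]] /countable_injP[phi phi_inj].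
have code_inj : injective (phi \o e).
  by move=> b1 b2 /phi_inj eq_e; apply: e_inj; apply: eq_e; rewrite inE.
pose decode n := xget (fun=> false) [set b | phi (e b) = n].
pose diag n := ~~ decode n n.
have decodeK : decode (phi (e diag)) = diag.
  apply: code_inj; apply: (@xgetPex _ (fun=> false) [set b | phi (e b) = _]).
  by exists diag.
have : diag (phi (e diag)) = ~~ decode (phi (e diag)) (phi (e diag)) by [].
by rewrite decodeK; case: (diag _).
Qed.

Lemma continuum_small_inj (T U : Type) (f : T -> U) :
  injective f -> continuum_small U -> continuum_small T.
Proof. by move=> f_inj [e e_inj]; exists (e \o f) => t1 t2 /e_inj/f_inj. Qed.

Lemma continuum_small_count (A : countType) : continuum_small A.
Proof.
exists (fun a n => n == pickle a) => a1 a2 /(congr1 (fun b => b (pickle a2))).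
by rewrite eqxx => /eqP/(pcan_inj pickleK).
Qed.

Lemma continuum_small_fun (A : countType) (T : Type) :
  continuum_small T -> continuum_small (A -> T).
Proof.
move=> [e e_inj]; exists (fun f n => if @unpickle (A * nat)%type n is Some (a, m)
  then e (f a) m else false) => f1 f2 eq_f; apply/funext => a; apply: e_inj.
by apply/funext => m; have := congr1 (fun b => b (pickle (a, m))) eq_f; rewrite /= pickleK.
Qed.

Lemma continuum_small_prod (T U : Type) :
  continuum_small T -> continuum_small U -> continuum_small (T * U).
Proof.
move=> [eT eT_inj] [eU eU_inj].
exists (fun p n => if odd n then eU p.2 n./2 else eT p.1 n./2) => -[t1 u1] [t2 u2] eq_e.
have eq_n n := congr1 (fun b => b n) eq_e.
congr pair; [apply: eT_inj | apply: eU_inj]; apply/funext => m.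
- by have := eq_n m.*2; rewrite /= odd_double doubleK.
- by have := eq_n m.*2.+1; rewrite /= odd_double /= uphalf_double.
Qed.

Lemma continuum_in_sub (X : Type) (A B : set X) :
  A `<=` B -> continuum_in A -> continuum_in B.
Proof. by move=> AB [e [e_inj e_in]]; exists e; split=> // b; apply: AB. Qed.

Lemma continuum_selection (X : pointedType) (K : Type) (target : K -> set X) :
  continuum_small K -> (forall k, continuum_in (target k)) ->
  exists sel : K -> X, injective sel /\ forall k, target k (sel k).
Proof.
move=> K_small target_big; have [W W_wo] := well_ordering_principle (nat -> bool).
exact: (@injective_selection _ W W_wo X K target target_big K_small).
Qed.

Lemma count_iota_le (P : pred nat) n t :
  (forall k, P k -> (k < n)%N) -> (count P (iota 0 t) <= n)%N.
Proof.
move=> P_lt; rewrite -size_filter -[leqRHS](size_iota 0).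
apply: uniq_leq_size; first by rewrite filter_uniq ?iota_uniq.
by move=> k; rewrite mem_filter !mem_iota => /andP[/P_lt ->].
Qed.

Lemma count_iota_ge (P : pred nat) n t :
  (n <= t)%N -> (forall k, (k < n)%N -> P k) -> (n <= count P (iota 0 t))%N.
Proof.
move=> le_nt lt_P; rewrite -size_filter -[leqLHS](size_iota 0).
apply: uniq_leq_size; first exact: iota_uniq.
by move=> k; rewrite mem_filter !mem_iota /= => lt_kn; rewrite lt_P ?(leq_trans lt_kn).
Qed.

Definition hovers (x : nat -> nat) (j : nat) :=
  (exists N, forall t, (N <= t)%N -> (x t <= j.+1)%N) /\
  (forall N, exists2 t, (N <= t)%N & (j <= x t)%N).

Lemma hovers_gap x j : hovers x j -> ~ hovers x j.+2.
Proof.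
move=> [[N x_le] _] [_ /(_ N)[t le_Nt]].
by rewrite leqNgt ltnS x_le.
Qed.

Definition escape (x : nat -> nat) (p : nat) : nat :=
  if `[< hovers x (3 * p) >] then
    (if `[< hovers x (3 * p).+1 >] then (3 * p).+2 else (3 * p).+1)
  else 3 * p.

Lemma escape_not_hovered x p : ~ hovers x (escape x p).
Proof.
rewrite /escape; case: ifPn => [/asboolP hov0|/asboolP //].
by case: ifPn => [_ /(hovers_gap hov0)|/asboolP].
Qed.

Lemma escape_bounds x p : (3 * p <= escape x p <= (3 * p).+2)%N.
Proof. by rewrite /escape; case: ifP => _; [case: ifP => _|]; lia. Qed.

Lemma escape_lt x y p q : (p < q)%N -> (escape x p < escape y q)%N.
Proof. by move=> lt_pq; have := escape_bounds x p; have := escape_bounds y q; lia. Qed.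

Lemma limn_esup_inf (R : realType) (u : (\bar R)^nat) :
  limn_esup u = ereal_inf (range (esups u)).
Proof. by rewrite limn_esup_lim; apply/cvg_lim => //; exact: cvg_esups_inf. Qed.

Section CountingStrategy.
Variables (R : realType) (a : nat -> R).
Hypothesis a_incr : forall n, a n < a n.+1.

Lemma a_lt m n : (m < n)%N -> a m < a n.
Proof. by apply: (@homo_ltn _ a (fun x y => x < y)) => // y x z; exact: lt_trans. Qed.

Lemma a_le m n : (m <= n)%N -> a m <= a n.
Proof. by rewrite leq_eqVlt => /orP[/eqP->//|/a_lt/ltW]. Qed.

Definition counting_strategy (s : seq R) : nat :=
  count (fun k => a k <= nth 0 s (size s).-1) (iota 0 (size s)).

Lemma counting_play (v : nat -> R) t :
  playI counting_strategy v t.+1 = count (fun k => a k <= v t) (iota 0 t.+1).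
Proof.
rewrite /playI /counting_strategy size_map size_iota.
by rewrite (nth_map 0%N) ?size_iota // nth_iota.
Qed.

Section Play.
Variable v : nat -> R.
Local Notation x := (playI counting_strategy v).
Local Notation limsup_v := (limn_esup (fun t => (v t)%:E)).

Lemma counting_play_bounded j : (limsup_v < (a j.+1)%:E)%E ->
  exists N, forall t, (N <= t)%N -> (x t <= j.+1)%N.
Proof.
rewrite limn_esup_inf => /ereal_inf_lt[_ [N _ <-]] sup_lt.
exists N.+1 => -[//|t] le_Nt; have lt_v : v t < a j.+1.
  by rewrite -lte_fin; apply: le_lt_trans sup_lt; apply: ereal_sup_ubound; exists t.
rewrite counting_play; apply: count_iota_le => k le_av; rewrite ltnNge.
by apply/negP => /a_le le_ja; have := lt_le_trans lt_v (le_trans le_ja le_av); rewrite ltxx.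
Qed.

Lemma counting_play_large j : ((a j)%:E < limsup_v)%E ->
  forall N, exists2 t, (N <= t)%N & (j.+1 <= x t)%N.
Proof.
rewrite limn_esup_inf => lt_inf N.
have := lt_le_trans lt_inf (ereal_inf_lbound (ex_intro2 _ _ (maxn N j) I erefl)).
move=> /ereal_sup_gt[_ [t /= le_t <-]]; rewrite lte_fin => lt_v.
exists t.+1; first by rewrite ltnW // ltnS (leq_trans (leq_maxl N j)).
rewrite counting_play; apply: count_iota_ge => [|k lt_kj].
  by rewrite ltnS (leq_trans (leq_maxr N j)).
by rewrite ltW // (le_lt_trans (a_le _) lt_v) // -ltnS.
Qed.

Lemma counting_hovers j : limsup_v = (a j)%:E -> hovers x j.
Proof.
move=> lim_j; split; first by apply: counting_play_bounded; rewrite lim_j lte_fin.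
case: j lim_j => [_ N|j lim_j]; first by exists N.
by apply: counting_play_large; rewrite lim_j lte_fin.
Qed.

End Play.

Lemma counting_strategy_wins (g : baire -> nat) :
  (forall x, ~ hovers x (g x)) -> I_has_winning_strategy (fun x => a (g x)).
Proof.
move=> g_ok; exists counting_strategy => v; apply/negP => /eqP eq_f.
exact: (g_ok _ (counting_hovers (esym eq_f))).
Qed.

End CountingStrategy.

Section TernarySums.
Variable R : realType.

Definition ternary_term (b : nat -> bool) : R ^nat :=
  fun n => (2 * (b n)%:R : R) / 3 ^+ n.+1.

Definition ternary_partial (b : nat -> bool) : R ^nat := series (ternary_term b).

Definition ternary_sum (b : nat -> bool) : R := limn (ternary_partial b).

Lemma ternary_term_ge0 b n : 0 <= ternary_term b n.
Proof. by apply: divr_ge0; [apply: mulr_ge0 | apply: exprn_ge0]. Qed.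

(* The partial sum plus the maximal remaining tail 3^-N does not increase. *)
Lemma ternary_partial_tail b N m :
  ternary_partial b (N + m)%N + (3 ^+ (N + m))^-1 <= ternary_partial b N + (3 ^+ N)^-1.
Proof.
elim: m => [|m IH]; first by rewrite addn0.
rewrite addnS /ternary_partial seriesSr; apply: le_trans IH.
rewrite -/(ternary_partial b _) -addrA lerD2l /ternary_term exprS invfM.
have : 0 < (3 ^+ (N + m))^-1 :> R by rewrite invr_gt0 exprn_gt0.
by set q := (3 ^+ (N + m))^-1; case: (b _) => /=; lra.
Qed.

Lemma ternary_partial_nd b : {homo ternary_partial b : i j / (i <= j)%N >-> i <= j}.
Proof.
apply: homo_leq => //; first by move=> ? ? ?; exact: le_trans.
by move=> i; rewrite /ternary_partial seriesSr lerDl ternary_term_ge0.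
Qed.

Lemma ternary_partial_cvg b : cvgn (ternary_partial b).
Proof.
apply: nondecreasing_is_cvgn; first exact: ternary_partial_nd.
exists 1 => _ [n _ <-]; have := ternary_partial_tail b 0 n.
have -> : ternary_partial b 0 = 0 by rewrite /ternary_partial seriesEnat /= big_geq.
rewrite add0n expr0 invr1 add0r; apply: le_trans.
by rewrite lerDl invr_ge0 exprn_ge0.
Qed.

Lemma ternary_sum_middle_thirds b : middle_thirds R (ternary_sum b).
Proof. by exists b; exact: ternary_partial_cvg. Qed.

Lemma ternary_partial_le_sum b n : ternary_partial b n <= ternary_sum b.
Proof.
apply: nondecreasing_cvgn_le; [exact: ternary_partial_nd | exact: ternary_partial_cvg].
Qed.

Lemma ternary_sum_le_partial b N : ternary_sum b <= ternary_partial b N + (3 ^+ N)^-1.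
Proof.
apply: limr_le; first exact: ternary_partial_cvg.
near=> n; have le_Nn : (N <= n)%N by near: n; exists N.
have := ternary_partial_tail b N (n - N); rewrite subnKC //; apply: le_trans.
by rewrite lerDl invr_ge0 exprn_ge0.
Unshelve. all: by end_near. Qed.

Lemma ternary_partial_prefix b1 b2 n :
  (forall k, (k < n)%N -> b1 k = b2 k) -> ternary_partial b1 n = ternary_partial b2 n.
Proof.
move=> eq_b; rewrite /ternary_partial !seriesEnat; apply: eq_big_nat => k /andP[_ lt_kn].
by rewrite /ternary_term eq_b.
Qed.

Lemma ternary_sum_lt b1 b2 n : ternary_partial b1 n = ternary_partial b2 n ->
  b1 n -> ~~ b2 n -> ternary_sum b2 < ternary_sum b1.
Proof.
move=> eq_n b1n b2n; have q_gt0 : 0 < (3 ^+ n.+1)^-1 :> R by rewrite invr_gt0 exprn_gt0.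
apply: le_lt_trans (ternary_sum_le_partial b2 n.+1) _.
apply: lt_le_trans (ternary_partial_le_sum b1 n.+1).
rewrite /ternary_partial !seriesSr -!/(ternary_partial _ n) eq_n /ternary_term b1n (negbTE b2n).
by rewrite mulr0 mul0r addr0 mulr1 ltrD2l; move: q_gt0; set q := 3 ^- n.+1; lra.
Qed.

Lemma ternary_sum_inj : injective ternary_sum.
Proof.
move=> b1 b2 eq_sum; apply/funext => n; elim/ltn_ind: n => n IH.
have eq_n := ternary_partial_prefix IH.
case h1: (b1 n); case h2: (b2 n) => //.
  by have := ternary_sum_lt eq_n h1 (negbT h2); rewrite eq_sum ltxx.
by have := ternary_sum_lt (esym eq_n) h2 (negbT h1); rewrite eq_sum ltxx.
Qed.

Definition ternary_prefix (l : seq bool) : R :=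
  ternary_partial (nth false l) (size l).

Lemma ternary_partial_prefixE b N : ternary_partial b N = ternary_prefix (mkseq b N).
Proof.
by rewrite /ternary_prefix size_mkseq; apply: ternary_partial_prefix => k lt_kN; rewrite nth_mkseq.
Qed.

Lemma ternary_partial_middle_thirds b N : middle_thirds R (ternary_partial b N).
Proof.
exists (fun i => (i < N)%N && b i); apply: cvg_near_cst; near=> n.
have le_Nn : (N <= n)%N by near: n; exists N.
rewrite -(subnKC le_Nn); elim: (n - N)%N => [|m IH].
  by rewrite addn0; apply: ternary_partial_prefix => k ->.
rewrite addnS /ternary_partial seriesSr -/(ternary_partial _ _) IH /ternary_term.
by rewrite ltnNge leq_addr /= mulr0 mul0r addr0.
Unshelve. all: by end_near. Qed.

End TernarySums.

Lemma baire_hausdorff : hausdorff_space baire.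
Proof. exact: (hausdorff_product (fun _ => @discrete_hausdorff nat)). Qed.

Lemma within_continuous_seq (T U : topologicalType) (A : set T) (g : T -> U)
    (s : nat -> T) (y : T) :
  {within A, continuous g} -> A y -> (forall n, A (s n)) -> s @ \oo --> y ->
  (g \o s) @ \oo --> g y.
Proof.
move=> g_cont Ay As s_y; apply: cvg_trans ((subspace_continuousP A g).1 g_cont y Ay).
move=> V /= /s_y[N _ sV]; exists N => // n le_Nn.
by apply: sV => //; exact: As.
Qed.

Section CantorSets.
Variable R : realType.
Local Notation M := (middle_thirds R).

Definition cantor_homeo (C : set baire) (h : baire -> R) (g : R -> baire) :=
  [/\ h @` C `<=` M, g @` M `<=` C, {in C, cancel h g} & {in M, cancel g h}] /\
  {within C, continuous h} /\ {within M, continuous g}.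

Definition cantor_param (C : set baire) : R -> baire :=
  xget (fun=> point) [set g | exists h, cantor_homeo C h g].

Lemma cantor_paramP C : cantor_set R C -> exists h, cantor_homeo C h (cantor_param C).
Proof.
move=> [h [g hg]]; apply: (@xgetPex _ (fun=> point) [set g | exists h, cantor_homeo C h g]).
by exists g, h.
Qed.

Lemma cantor_homeo_image C h g : cantor_homeo C h g -> C = g @` M.
Proof.
move=> [[hC gM hK _] _]; apply/seteqP; split=> [x Cx|]; last exact: gM.
by exists (h x); [apply: hC; exists x | apply: hK; rewrite inE].
Qed.

Lemma cantor_set_continuum C : cantor_set R C -> continuum_in C.
Proof.
move=> /cantor_paramP[h [[_ gM _ gK] _]].
have M_sum b : M (ternary_sum R b) := ternary_sum_middle_thirds R b.
exists (cantor_param C \o ternary_sum R); split=> [b1 b2 /= eq_g|b]; last first.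
  by apply: gM; exists (ternary_sum R b).
apply: (@ternary_sum_inj R).
by rewrite -(gK _ (mem_set (M_sum b1))) -(gK _ (mem_set (M_sum b2))) eq_g.
Qed.

Definition cantor_code (C : set baire) : seq bool -> baire :=
  fun l => cantor_param C (ternary_prefix R l).

(* A Cantor set is determined by its code: the finite expansions are
   sequentially dense in M and the parametrization is continuous. *)
Lemma cantor_code_inj C1 C2 : cantor_set R C1 -> cantor_set R C2 ->
  cantor_code C1 = cantor_code C2 -> C1 = C2.
Proof.
move=> /cantor_paramP[h1 H1] /cantor_paramP[h2 H2] eq_code.
rewrite (cantor_homeo_image H1) (cantor_homeo_image H2).
have eq_param y : M y -> cantor_param C1 y = cantor_param C2 y.
  move=> My; have [b b_y] := My.
  have lim1 := within_continuous_seq H1.2.2 My (ternary_partial_middle_thirds R b) b_y.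
  have lim2 := within_continuous_seq H2.2.2 My (ternary_partial_middle_thirds R b) b_y.
  have eq_seq : cantor_param C1 \o ternary_partial R b = cantor_param C2 \o ternary_partial R b.
    apply/funext => n /=; rewrite ternary_partial_prefixE.
    by have := congr1 (fun c => c (mkseq b n)) eq_code.
  by rewrite eq_seq in lim1; exact: (cvg_unique baire_hausdorff lim1 lim2).
by apply/seteqP; split=> _ [y My <-]; exists y => //; rewrite eq_param.
Qed.

Lemma cantor_sets_small : continuum_small {C : set baire | cantor_set R C}.
Proof.
apply: (@continuum_small_inj _ _ (fun C => cantor_code (sval C))).
  move=> [C1 c1] [C2 c2] /= /(cantor_code_inj c1 c2) eq_C; subst C2.
  by congr exist; exact: Prop_irrelevance.
exact: continuum_small_fun (continuum_small_fun _ (continuum_small_count nat)).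
Qed.

End CantorSets.

(* A level function on N^N taking every value continuum often on every
   Cantor set: select distinct points of C for every (C, n, s) with s in 2^N
   and give the point selected for (C, n, s) the level n. *)
Lemma level_function (R : realType) : exists level : baire -> nat,
  forall C n, cantor_set R C -> continuum_in (C `&` [set x | level x = n]).
Proof.
pose K := ({C : set baire | cantor_set R C} * nat * (nat -> bool))%type.
have K_small : continuum_small K.
  apply: continuum_small_prod; last by exists id.
  exact: continuum_small_prod (cantor_sets_small R) (continuum_small_count nat).
have [sel [sel_inj sel_in]] := @continuum_selection _ K (fun t => sval t.1.1) K_small
  (fun t => cantor_set_continuum (svalP t.1.1)).
pose level x := xget 0%N [set n | exists t, sel t = x /\ t.1.2 = n].
have level_sel t : level (sel t) = t.1.2.
  have : [set n | exists t', sel t' = sel t /\ t'.1.2 = n] (level (sel t)).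
    by apply: xgetPex; exists t.1.2, t.
  by move=> [t' [/sel_inj -> ->]].
exists level => C n cC; exists (fun s => sel (exist _ C cC, n, s)).
split=> [s1 s2 /sel_inj [] //|s]; split; last exact: level_sel.
exact: (sel_in (exist _ C cC, n, s)).
Qed.

Unset Implicit Arguments.
Set Strict Implicit.

Theorem mainTheorem14 (R : realType) (S : set R) :
  (exists a : nat -> R, (forall n, S (a n)) /\ (forall n, a n < a n.+1)) ->
  exists f : baire -> R,
    (forall x, S (f x)) /\ I_has_winning_strategy f /\
    (forall (r : R) (C : set baire), cantor_set R C ->
       ~ countable (C `&` [set x | r <= f x]) \/ C `&` [set x | r <= f x] = set0).
Proof.
move=> [a [Sa a_incr]]; have [level level_dense] := level_function R.
pose g x := escape x (level x).
exists (fun x => a (g x)); split=> [x|]; first exact: Sa.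
split; first by apply: counting_strategy_wins => // x; exact: escape_not_hovered.
move=> r C cC; have [[x0 le_r]|no_x] := pselect (exists x0, r <= a (g x0)); last first.
  by right; apply/seteqP; split=> // x [_ le_r]; apply: no_x; exists x.
(* The points of C of level (level x0).+1 all have f-value above f x0. *)
left; apply: continuum_not_countable.
apply: continuum_in_sub (level_dense C (level x0).+1 cC) => x [Cx level_x].
split=> //=; apply: (le_trans le_r); apply/ltW/a_lt => //.
by apply: escape_lt; rewrite level_x.
Qed.
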